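(* Let $\mathbb{A}$ be a 2-category and $p:e\to b$ a 1-cell such that $\mathbb{A}$ has the two-dimensional cokernel diagram of $p$ and a right Kan extension $(t,\gamma)$ of $p$ along $p$ exists. Let $\ell:b\uparrow_pb\to b$ be the unique 1-cell with $\ell\delta^0=\mathrm{id}_b$, $\ell\delta^1=t$ and $\mathrm{id}_\ell\ast\alpha=\gamma$. Then $(t,\gamma)$ is preserved by $\delta^0:b\to b\uparrow_pb$ if and only if $\ell$ is left adjoint to $\delta^0$. In this case there is an adjunction $\ell\dashv\delta^0$ whose counit is the identity 2-cell $\mathrm{id}_{\mathrm{id}_b}:\ell\delta^0\Rightarrow\mathrm{id}_b$.
   Context: A 2-category is a $\mathbf{Cat}$-enriched category; composition of 1-cells is juxtaposition, vertical composition of 2-cells is $\cdot$, horizontal composition is $\ast$, $\mathrm{id}_f$ is the identity 2-cell on $f$. Opcomma object of $p$ along itself: an object $b\uparrow_p b$ with 1-cells $\delta^0,\delta^1:b\to b\uparrow_p b$ and a 2-cell $\alpha:\delta^1p\Rightarrow\delta^0p$ such that for every object $y$ the functor $h\mapsto(h\delta^0,h\delta^1,\mathrm{id}_h\ast\alpha)$, $\xi\mapsto(\xi\ast\mathrm{id}_{\delta^0},\xi\ast\mathrm{id}_{\delta^1})$ is an isomorphism from $\mathbb{A}(b\uparrow_p b,y)$ onto the category of triples $(h_0,h_1:b\to y,\ \beta:h_1p\Rightarrow h_0p)$ with morphisms pairs of 2-cells $(\xi_0:h_0\Rightarrow h_0',\xi_1:h_1\Rightarrow h_1')$ satisfying $(\xi_0\ast\mathrm{id}_p)\cdot\beta=\beta'\cdot(\xi_1\ast\mathrm{id}_p)$.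 Two-dimensional pushout of a span $f_0:c\to c_0$, $f_1:c\to c_1$: an object $P$ with $q_0:c_0\to P$, $q_1:c_1\to P$, $q_0f_0=q_1f_1$, such that for every $y$, $k\mapsto(kq_0,kq_1)$ is an isomorphism from $\mathbb{A}(P,y)$ onto the category of pairs $(k_0,k_1)$ with $k_0f_0=k_1f_1$, whose morphisms are pairs of 2-cells $(\xi_0,\xi_1)$ with $\xi_0\ast\mathrm{id}_{f_0}=\xi_1\ast\mathrm{id}_{f_1}$. $\mathbb{A}$ has the two-dimensional cokernel diagram of $p$ if it has an opcomma object $b\uparrow_p b$ of $p$ along itself and a two-dimensional pushout $b\uparrow_pb\uparrow_pb$ of the span $(\delta^0,\delta^1)$, with 1-cells $D^0,D^2:b\uparrow_pb\to b\uparrow_pb\uparrow_pb$ satisfying $D^2\delta^0=D^0\delta^1$. Right Kan extension of $f:z\to y$ along $g:z\to x$: a pair $(r:x\to y,\gamma:rg\Rightarrow f)$ such that for each $k:x\to y$, $\beta\mapsto\gamma\cdot(\beta\ast\mathrm{id}_g)$ is a bijection from 2-cells $k\Rightarrow r$ to 2-cells $kg\Rightarrow f$. A 1-cell $d:y\to y'$ preserves this right Kan extension if $(dr,\mathrm{id}_d\ast\gamma)$ is a right Kan extension of $df$ along $g$. *)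

(* A strict 2-category (Cat-enriched category)
   presented globularly: 2-cells between objects a,b form a type [cell a b]
   with source/target 1-cells [s2]/[t2]; composition laws are required
   for composable cells.  Juxtaposition [g f] = [comp1 g f] (g after f). *)

Set Implicit Arguments.
Unset Strict Implicit.

Record TwoCat := {
  ob : Type;
  hom : ob -> ob -> Type;
  cell : ob -> ob -> Type;
  s2 : forall a b, cell a b -> hom a b;
  t2 : forall a b, cell a b -> hom a b;
  id1 : forall a, hom a a;
  comp1 : forall a b c, hom b c -> hom a b -> hom a c;
  id2 : forall a b, hom a b -> cell a b;
  vcomp : forall a b, cell a b -> cell a b -> cell a b; (* vcomp beta alpha = beta . alpha *)
  hcomp : forall a b c, cell b c -> cell a b -> cell a c;
  comp1_assoc : forall a b c d (h : hom c d) (g : hom b c) (f : hom a b),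
      comp1 h (comp1 g f) = comp1 (comp1 h g) f;
  comp1_id_l : forall a b (f : hom a b), comp1 (id1 b) f = f;
  comp1_id_r : forall a b (f : hom a b), comp1 f (id1 a) = f;
  s2_id2 : forall a b (f : hom a b), s2 (id2 f) = f;
  t2_id2 : forall a b (f : hom a b), t2 (id2 f) = f;
  s2_vcomp : forall a b (be al : cell a b), t2 al = s2 be -> s2 (vcomp be al) = s2 al;
  t2_vcomp : forall a b (be al : cell a b), t2 al = s2 be -> t2 (vcomp be al) = t2 be;
  vcomp_assoc : forall a b (ga be al : cell a b), t2 al = s2 be -> t2 be = s2 ga ->
      vcomp ga (vcomp be al) = vcomp (vcomp ga be) al;
  vcomp_id_r : forall a b (al : cell a b), vcomp al (id2 (s2 al)) = al;
  vcomp_id_l : forall a b (al : cell a b), vcomp (id2 (t2 al)) al = al;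
  s2_hcomp : forall a b c (be : cell b c) (al : cell a b),
      s2 (hcomp be al) = comp1 (s2 be) (s2 al);
  t2_hcomp : forall a b c (be : cell b c) (al : cell a b),
      t2 (hcomp be al) = comp1 (t2 be) (t2 al);
  hcomp_id2 : forall a b c (g : hom b c) (f : hom a b),
      hcomp (id2 g) (id2 f) = id2 (comp1 g f);
  interchange : forall a b c (be' be : cell b c) (al' al : cell a b),
      t2 be = s2 be' -> t2 al = s2 al' ->
      hcomp (vcomp be' be) (vcomp al' al) = vcomp (hcomp be' al') (hcomp be al);
  hcomp_assoc : forall a b c d (ga : cell c d) (be : cell b c) (al : cell a b),
      hcomp ga (hcomp be al) = hcomp (hcomp ga be) al;
  hcomp_id_l : forall a b (al : cell a b), hcomp (id2 (id1 b)) al = al;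
  hcomp_id_r : forall a b (al : cell a b), hcomp al (id2 (id1 a)) = al
}.

Arguments hom {t} _ _.
Arguments cell {t} _ _.
Arguments s2 {t a b} _.
Arguments t2 {t a b} _.
Arguments id1 {t} _.
Arguments comp1 {t a b c} _ _.
Arguments id2 {t a b} _.
Arguments vcomp {t a b} _ _.
Arguments hcomp {t a b c} _ _.

Unset Implicit Arguments.
Section Defs.
Context {A : TwoCat}.

Definition is2 {a b : ob A} (al : cell a b) (f g : hom a b) : Prop :=
  s2 al = f /\ t2 al = g.

(* Opcomma object (P, d0, d1, al) of p : e -> b along itself:
   al : d1 p => d0 p, and for every y the comparison functor
   A(P,y) -> triples is an isomorphism of categories, i.e. bijective
   on objects and on each hom-set. *)
Definition is_opcomma {e b : ob A} (p : hom e b)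
  (P : ob A) (d0 d1 : hom b P) (al : cell e P) : Prop :=
  is2 al (comp1 d1 p) (comp1 d0 p) /\
  forall y : ob A,
    (forall (h0 h1 : hom b y) (be : cell e y),
        is2 be (comp1 h1 p) (comp1 h0 p) ->
        exists! h : hom P y,
          comp1 h d0 = h0 /\ comp1 h d1 = h1 /\ hcomp (id2 h) al = be) /\
    (forall (h h' : hom P y) (xi0 xi1 : cell b y),
        is2 xi0 (comp1 h d0) (comp1 h' d0) ->
        is2 xi1 (comp1 h d1) (comp1 h' d1) ->
        vcomp (hcomp xi0 (id2 p)) (hcomp (id2 h) al)
          = vcomp (hcomp (id2 h') al) (hcomp xi1 (id2 p)) ->
        exists! xi : cell P y,
          is2 xi h h' /\ hcomp xi (id2 d0) = xi0 /\ hcomp xi (id2 d1) = xi1).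

Definition is_pushout2 {c c0 c1 : ob A} (f0 : hom c c0) (f1 : hom c c1)
  (Q : ob A) (q0 : hom c0 Q) (q1 : hom c1 Q) : Prop :=
  comp1 q0 f0 = comp1 q1 f1 /\
  forall y : ob A,
    (forall (k0 : hom c0 y) (k1 : hom c1 y),
        comp1 k0 f0 = comp1 k1 f1 ->
        exists! k : hom Q y, comp1 k q0 = k0 /\ comp1 k q1 = k1) /\
    (forall (k k' : hom Q y) (xi0 : cell c0 y) (xi1 : cell c1 y),
        is2 xi0 (comp1 k q0) (comp1 k' q0) ->
        is2 xi1 (comp1 k q1) (comp1 k' q1) ->
        hcomp xi0 (id2 f0) = hcomp xi1 (id2 f1) ->
        exists! xi : cell Q y,
          is2 xi k k' /\ hcomp xi (id2 q0) = xi0 /\ hcomp xi (id2 q1) = xi1).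

Definition is_ran {x y z : ob A} (f : hom z y) (g : hom z x)
  (r : hom x y) (ga : cell z y) : Prop :=
  is2 ga (comp1 r g) f /\
  forall (k : hom x y) (de : cell z y),
    is2 de (comp1 k g) f ->
    exists! be : cell x y, is2 be k r /\ vcomp ga (hcomp be (id2 g)) = de.

Definition preserves_ran {x y y' z : ob A} (f : hom z y) (g : hom z x)
  (r : hom x y) (ga : cell z y) (d : hom y y') : Prop :=
  is_ran (comp1 d f) g (comp1 d r) (hcomp (id2 d) ga).

Definition adjunction {a b : ob A} (l : hom a b) (r : hom b a)
  (eta : cell a a) (eps : cell b b) : Prop :=
  is2 eta (id1 a) (comp1 r l) /\ is2 eps (comp1 l r) (id1 b) /\
  vcomp (hcomp eps (id2 l)) (hcomp (id2 l) eta) = id2 l /\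
  vcomp (hcomp (id2 r) eps) (hcomp eta (id2 r)) = id2 r.

Definition left_adjoint {a b : ob A} (l : hom a b) (r : hom b a) : Prop :=
  exists eta eps, adjunction l r eta eps.

End Defs.

(* Right adjoints preserve right Kan extensions, which gives one direction.
   Conversely, if δ0 preserves (t, γ), then α : δ1 p ⇒ δ0 p factors as
   (δ0 γ)·(η1 p) for a 2-cell η1 : δ1 ⇒ δ0 t.  The pair (id_{δ0}, η1) is a
   morphism of triples, so the two-dimensional property of the opcomma object
   yields η : id ⇒ δ0 ℓ with η δ0 = id_{δ0} and η δ1 = η1.  This makes the
   triangle identity for δ0 hold with the identity counit; the one for ℓ is
   checked after whiskering with δ0 and δ1, where it reduces to ℓ η1 = id_t,
   i.e. to the uniqueness part of the Kan extension. *)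

Ltac comp1_eq :=
  repeat (progress (
    repeat rewrite <- comp1_assoc; rewrite ?comp1_id_l, ?comp1_id_r;
    repeat match goal with
    | H : comp1 ?a ?b = _ |- context [comp1 ?a (comp1 ?b ?X)] =>
        rewrite (comp1_assoc a b X), H
    | H : comp1 ?a ?b = _ |- context [comp1 ?a ?b] => rewrite H
    end));
  reflexivity.

Ltac rewrite_src_tgt := repeat first [
    progress rewrite ?s2_id2, ?t2_id2, ?s2_hcomp, ?t2_hcomp
  | match goal with
    | H : is2 ?x _ _ |- context [s2 ?x] => rewrite (proj1 H)
    | H : is2 ?x _ _ |- context [t2 ?x] => rewrite (proj2 H)
    | |- context [s2 (vcomp ?y ?x)] =>
        rewrite (@s2_vcomp _ _ _ y x) by (rewrite_src_tgt; comp1_eq)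
    | |- context [t2 (vcomp ?y ?x)] =>
        rewrite (@t2_vcomp _ _ _ y x) by (rewrite_src_tgt; comp1_eq)
    end ].

Ltac solve_is2 := split; rewrite_src_tgt; comp1_eq.

Section Whiskering.
Context {A : TwoCat}.

Lemma is2_id2 {a b : ob A} (f : hom a b) : is2 (id2 f) f f.
Proof. split; [apply s2_id2 | apply t2_id2]. Qed.

Lemma vcomp_id2_l {a b : ob A} {f g : hom a b} {x : cell a b} :
  is2 x f g -> vcomp (id2 g) x = x.
Proof. intros [<- <-]; apply vcomp_id_l. Qed.

Lemma vcomp_id2_r {a b : ob A} {f g : hom a b} {x : cell a b} :
  is2 x f g -> vcomp x (id2 f) = x.
Proof. intros [<- <-]; apply vcomp_id_r. Qed.

Lemma vcomp_assoc_is2 {a b : ob A} {f g h k : hom a b} (x y z : cell a b) :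
  is2 x f g -> is2 y g h -> is2 z h k ->
  vcomp z (vcomp y x) = vcomp (vcomp z y) x.
Proof. intros [? ?] [? ?] [? ?]; apply vcomp_assoc; congruence. Qed.

Lemma vcomp_id2_id2 {a b : ob A} (f : hom a b) : vcomp (id2 f) (id2 f) = id2 f.
Proof. exact (vcomp_id2_l (is2_id2 f)). Qed.

Lemma whisker_l_vcomp {a b c : ob A} {f g k : hom a b} (h : hom b c) (x y : cell a b) :
  is2 x f g -> is2 y g k ->
  hcomp (id2 h) (vcomp y x) = vcomp (hcomp (id2 h) y) (hcomp (id2 h) x).
Proof.
  intros [? ?] [? ?].
  transitivity (hcomp (vcomp (id2 h) (id2 h)) (vcomp y x));
    [now rewrite vcomp_id2_id2 |].
  apply interchange; [rewrite s2_id2, t2_id2 | congruence]; reflexivity.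
Qed.

Lemma whisker_r_vcomp {a b c : ob A} {f g k : hom b c} (h : hom a b) (x y : cell b c) :
  is2 x f g -> is2 y g k ->
  hcomp (vcomp y x) (id2 h) = vcomp (hcomp y (id2 h)) (hcomp x (id2 h)).
Proof.
  intros [? ?] [? ?].
  transitivity (hcomp (vcomp y x) (vcomp (id2 h) (id2 h)));
    [now rewrite vcomp_id2_id2 |].
  apply interchange; [congruence | rewrite s2_id2, t2_id2]; reflexivity.
Qed.

Lemma whisker_exchange {a b c : ob A} {f f' : hom b c} {g g' : hom a b}
    (y : cell b c) (x : cell a b) :
  is2 y f f' -> is2 x g g' ->
  vcomp (hcomp y (id2 g')) (hcomp (id2 f) x)
  = vcomp (hcomp (id2 f') x) (hcomp y (id2 g)).
Proof.
  intros Hy Hx; pose proof Hy as [Hy0 Hy1]; pose proof Hx as [Hx0 Hx1].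
  transitivity (hcomp y x).
  - rewrite <- interchange by (rewrite ?s2_id2, ?t2_id2; congruence).
    now rewrite (vcomp_id2_r Hy), (vcomp_id2_l Hx).
  - rewrite <- interchange by (rewrite ?s2_id2, ?t2_id2; congruence).
    now rewrite (vcomp_id2_l Hy), (vcomp_id2_r Hx).
Qed.

Lemma whisker_l_comp1 {a b c d : ob A} (h : hom c d) (k : hom b c) (x : cell a b) :
  hcomp (id2 h) (hcomp (id2 k) x) = hcomp (id2 (comp1 h k)) x.
Proof. now rewrite hcomp_assoc, hcomp_id2. Qed.

Lemma whisker_r_comp1 {a b c d : ob A} (x : cell c d) (h : hom b c) (k : hom a b) :
  hcomp (hcomp x (id2 h)) (id2 k) = hcomp x (id2 (comp1 h k)).
Proof. now rewrite <- hcomp_assoc, hcomp_id2. Qed.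

End Whiskering.

Section Adjunction.
Context {A : TwoCat} {a b : ob A} {l : hom a b} {r : hom b a}
  {eta : cell a a} {eps : cell b b}.
Hypothesis Hadj : adjunction l r eta eps.

Lemma adjunction_transposeK {z : ob A} {k : hom z a} {h : hom z b} {x : cell z a} :
  is2 x k (comp1 r h) ->
  vcomp (hcomp (id2 r) (vcomp (hcomp eps (id2 h)) (hcomp (id2 l) x)))
        (hcomp eta (id2 k)) = x.
Proof.
  destruct Hadj as [Heta [Heps [_ Htri]]]; intros Hx.
  rewrite (whisker_l_vcomp r (hcomp (id2 l) x)) by solve_is2.
  rewrite <- (vcomp_assoc_is2 (hcomp eta (id2 k))) by solve_is2.
  rewrite whisker_l_comp1, <- (whisker_exchange eta x) by solve_is2.
  rewrite hcomp_id_l, (vcomp_assoc_is2 x) by solve_is2.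
  rewrite hcomp_assoc, <- (whisker_r_comp1 eta r h).
  rewrite <- (whisker_r_vcomp h (hcomp eta (id2 r))) by solve_is2.
  rewrite Htri, hcomp_id2.
  exact (vcomp_id2_l Hx).
Qed.

Lemma right_adjoint_preserves_ran {x z : ob A} {f : hom z b} {g : hom z x}
    {t : hom x b} {ga : cell z b} :
  is_ran f g t ga -> preserves_ran f g t ga r.
Proof.
  pose proof Hadj as [Heta [Heps _]]; intros [Hga Hran].
  split; [solve_is2 |].
  intros k de Hde.
  (* Transpose [de] across l ⊣ r, factor it through (t, ga), transpose back. *)
  set (de' := vcomp (hcomp eps (id2 f)) (hcomp (id2 l) de)).
  assert (Hde' : is2 de' (comp1 (comp1 l k) g) f) by (unfold de'; solve_is2).
  destruct (Hran _ _ Hde') as [be' [[Hbe' Ebe'] Ube']].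
  exists (vcomp (hcomp (id2 r) be') (hcomp eta (id2 k))).
  split; [split; [solve_is2 |] |].
  - rewrite (whisker_r_vcomp g (hcomp eta (id2 k))) by solve_is2.
    rewrite <- hcomp_assoc, whisker_r_comp1.
    rewrite (vcomp_assoc_is2 (hcomp eta (id2 (comp1 k g)))) by solve_is2.
    rewrite <- (whisker_l_vcomp r (hcomp be' (id2 g))) by solve_is2.
    rewrite Ebe'.
    exact (adjunction_transposeK Hde).
  - intros be [Hbe Ebe].
    assert (Hbe'_transpose : be' = vcomp (hcomp eps (id2 t)) (hcomp (id2 l) be)).
    { apply Ube'; split; [solve_is2 |].
      rewrite (whisker_r_vcomp g (hcomp (id2 l) be)), whisker_r_comp1,
        <- hcomp_assoc by solve_is2.
      rewrite (vcomp_assoc_is2 (hcomp (id2 l) (hcomp be (id2 g)))) by solve_is2.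
      pose proof (whisker_exchange eps ga Heps Hga) as Hnat.
      rewrite hcomp_id_l in Hnat; rewrite <- Hnat.
      rewrite <- (vcomp_assoc_is2 (hcomp (id2 l) (hcomp be (id2 g)))) by solve_is2.
      rewrite <- whisker_l_comp1, <- (whisker_l_vcomp l (hcomp be (id2 g))) by solve_is2.
      now rewrite Ebe. }
    rewrite Hbe'_transpose.
    exact (adjunction_transposeK Hbe).
Qed.

End Adjunction.

Section Universal2Cells.
Context {A : TwoCat}.

Lemma opcomma_cell_ext {e b P y : ob A} {p : hom e b} {d0 d1 : hom b P}
    {al : cell e P} {h h' : hom P y} (xi xi' : cell P y) :
  is_opcomma p P d0 d1 al -> is2 xi h h' -> is2 xi' h h' ->
  hcomp xi (id2 d0) = hcomp xi' (id2 d0) ->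
  hcomp xi (id2 d1) = hcomp xi' (id2 d1) -> xi = xi'.
Proof.
  intros [Hal Hop] Hxi Hxi' E0 E1.
  destruct (proj2 (Hop y) h h' (hcomp xi (id2 d0)) (hcomp xi (id2 d1)))
    as [u [_ Uu]]; [solve_is2 | solve_is2 | |].
  - rewrite !whisker_r_comp1; exact (whisker_exchange xi al Hxi Hal).
  - transitivity u; [symmetry |]; apply Uu; auto.
Qed.

Lemma ran_cell_ext {x y z : ob A} {f : hom z y} {g : hom z x} {r : hom x y}
    {ga : cell z y} {k : hom x y} (be be' : cell x y) :
  is_ran f g r ga -> is2 be k r -> is2 be' k r ->
  vcomp ga (hcomp be (id2 g)) = vcomp ga (hcomp be' (id2 g)) -> be = be'.
Proof.
  intros [Hga Hran] Hbe Hbe' E.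
  destruct (Hran k (vcomp ga (hcomp be (id2 g)))) as [u [_ Uu]]; [solve_is2 |].
  transitivity u; [symmetry |]; apply Uu; auto.
Qed.

End Universal2Cells.

Section CokernelAdjunction.
Context {A : TwoCat} {e b P : ob A} {p : hom e b} {d0 d1 : hom b P}
  {al : cell e P} {t : hom b b} {ga : cell e b} {l : hom P b}.
Hypothesis Hop : is_opcomma p P d0 d1 al.
Hypothesis Hran : is_ran p p t ga.
Hypotheses (Hl0 : comp1 l d0 = id1 b) (Hl1 : comp1 l d1 = t)
  (Hla : hcomp (id2 l) al = ga).

Lemma whisker_l_al_factor {eta1 : cell b P} :
  is2 eta1 d1 (comp1 d0 t) ->
  vcomp (hcomp (id2 d0) ga) (hcomp eta1 (id2 p)) = al ->
  hcomp (id2 l) eta1 = id2 t.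
Proof.
  pose proof Hran as [Hga _]; intros Heta1 E.
  apply (ran_cell_ext (k := t) _ _ Hran); [solve_is2 | apply is2_id2 |].
  rewrite hcomp_id2, (vcomp_id2_r Hga), <- hcomp_assoc.
  transitivity (hcomp (id2 l) (vcomp (hcomp (id2 d0) ga) (hcomp eta1 (id2 p)))).
  - rewrite (whisker_l_vcomp l (hcomp eta1 (id2 p))) by solve_is2.
    now rewrite whisker_l_comp1, Hl0, hcomp_id_l.
  - now rewrite E.
Qed.

Lemma preserves_ran_adjunction :
  preserves_ran p p t ga d0 ->
  exists eta : cell P P, adjunction l d0 eta (id2 (id1 b)).
Proof.
  pose proof Hop as [Hal Hop2].
  intros [_ Hpres].
  destruct (Hpres d1 al) as [eta1 [[Heta1 Eeta1] _]]; [solve_is2 |].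
  destruct (proj2 (Hop2 P) (id1 P) (comp1 d0 l) (id2 d0) eta1)
    as [eta [[Heta [E0 E1]] _]]; [solve_is2 | solve_is2 | |].
  { rewrite hcomp_id2, hcomp_id_l, <- whisker_l_comp1, Hla, Eeta1.
    apply (vcomp_id2_l (f := comp1 d1 p)); solve_is2. }
  assert (Hleta : hcomp (id2 l) eta = id2 l).
  { apply (opcomma_cell_ext (h := l) (h' := l) _ _ Hop);
      [solve_is2 | apply is2_id2 | |]; rewrite <- hcomp_assoc, hcomp_id2.
    - now rewrite E0, hcomp_id2.
    - now rewrite E1, (whisker_l_al_factor Heta1 Eeta1), Hl1. }
  exists eta; split; [exact Heta |]; split; [solve_is2 |]; split.
  - rewrite hcomp_id_l, Hleta; apply vcomp_id2_id2.
  - rewrite E0, hcomp_id2, comp1_id_r; apply vcomp_id2_id2.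
Qed.

End CokernelAdjunction.

Theorem proposition4p2 (A : TwoCat) (e b : ob A) (p : hom e b)
  (* two-dimensional cokernel diagram of p *)
  (P : ob A) (d0 d1 : hom b P) (al : cell e P)
  (Hop : is_opcomma p P d0 d1 al)
  (Q : ob A) (D0 D2 : hom P Q)
  (Hpo : is_pushout2 d0 d1 Q D2 D0)
  (* right Kan extension (t, ga) of p along p *)
  (t : hom b b) (ga : cell e b)
  (Hran : is_ran p p t ga)
  (* the 1-cell l induced by (id_b, t, ga) *)
  (l : hom P b)
  (Hl0 : comp1 l d0 = id1 b) (Hl1 : comp1 l d1 = t)
  (Hla : hcomp (id2 l) al = ga) :
  (preserves_ran p p t ga d0 <-> left_adjoint l d0) /\
  (preserves_ran p p t ga d0 ->
     exists eta : cell P P, adjunction l d0 eta (id2 (id1 b))).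
Proof.
  pose proof (preserves_ran_adjunction Hop Hran Hl0 Hl1 Hla) as Hunit.
  split; [split |]; [| | exact Hunit].
  - intros Hpres; destruct (Hunit Hpres) as [eta Hadj].
    now exists eta, (id2 (id1 b)).
  - intros [eta [eps Hadj]].
    exact (right_adjoint_preserves_ran Hadj Hran).
Qed.
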